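(* Let $q\in[0,1)$, $t\in(0,1)$, and $\Omega_n=\{\lambda \text{ partition}:\ell(\lambda)\le n\}$, where $\ell(\lambda)$ is the number of nonzero parts. Define $\eta_n(\lambda)=\ell(\lambda)-n$ and $\phi_{n,x}(\lambda)=\prod_{j\ge0}\frac{1+q^{\lambda_{n-j}}t^{j+x}}{1+t^{j+x}}$ for $x\in\mathbb R$, with the convention $q^{\lambda_{-m}}=0$ for $m\ge0$ (and $q^0=1$, including when $q=0$). Then, for every choice of probability measures on the sets $\Omega_n$, the functions $\eta_n,\phi_{n,x}$ satisfy conditions (1)–(4) below (pointwise on $\Omega_n$), and consequently $\{\ell(\lambda)-n\}_{n\ge1}$ and $\{F_n(x)=\mathbb E\prod_{j\ge0}\frac{1+q^{\lambda_{n-j}}t^{j+x}}{1+t^{j+x}}\}_{n\ge1}$ are asymptotically equivalent as $n\to\infty$. Conditions: (1) $0\le\phi_{n,x}\le\phi_{n,y}\le1$ for $x\le y$; (2) for every $\varepsilon>0$ there is $M$ with $\phi_{n,x}<\varepsilon$ whenever $\eta_n-x>M$ (uniformly in $n,x$); (3) for every $\varepsilon>0$ there is $M$ with $\phi_{n,x}>1-\varepsilon$ whenever $\eta_n-x<-M$ (uniformly in $n,x$); (4) there is $c>0$ independent of $n$ with $\phi_{n,x+1}-\phi_{n,x}\ge c$ whenever $x<\eta_n\le x+1$.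
   Context: A sequence $\{\eta_n\}_{n\ge1}$ of real random variables spreads if $\lim_{n\to\infty}\sup_{x\in\mathbb R}\mathrm{Prob}\{x<\eta_n\le x+1\}=0$. A sequence $\{F_n\}_{n\ge1}$ of non-decreasing functions $\mathbb R\to\mathbb R$ spreads if $\lim_{n\to\infty}\sup_{x\in\mathbb R}(F_n(x+1)-F_n(x))=0$. A sequence of real random variables $\{\eta_n\}$ and a sequence of non-decreasing functions $\{F_n\}$ are asymptotically equivalent if (i) $\{\eta_n\}$ spreads if and only if $\{F_n\}$ spreads, and (ii) when both spread, $\lim_{n\to\infty}\sup_{x\in\mathbb R}(\mathrm{Prob}\{\eta_n\le x\}-F_n(x))=0$. *)

From Stdlib Require Import Reals Lra Lia List Sorted ClassicalEpsilon.
Open Scope R_scope.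

Definition is_partition (lam : list nat) : Prop :=
  Sorted (fun a b => (b <= a)%nat) lam /\ Forall (fun a => (0 < a)%nat) lam.

Definition ell (lam : list nat) : nat := length lam.

Definition in_Omega (n : nat) (lam : list nat) : Prop :=
  is_partition lam /\ (ell lam <= n)%nat.

(* the i-th part lambda_i (i >= 1); equals 0 for i > ell lam *)
Definition part (lam : list nat) (i : nat) : nat := nth (i - 1) lam 0%nat.

(* q^{lambda_{n-j}}, with the convention q^{lambda_{-m}} = 0 for m >= 0,
   i.e. it is 0 when n - j <= 0; Stdlib pow gives q^0 = 1 also for q = 0 *)
Definition qpow (q : R) (n : nat) (lam : list nat) (j : nat) : R :=
  if Nat.ltb j n then q ^ (part lam (n - j)) else 0.

Definition factor (q t : R) (n : nat) (lam : list nat) (x : R) (j : nat) : R :=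
  (1 + qpow q n lam j * Rpower t (INR j + x)) / (1 + Rpower t (INR j + x)).

Fixpoint prod_f_R0 (f : nat -> R) (N : nat) : R :=
  match N with
  | O => f O
  | S N' => prod_f_R0 f N' * f (S N')
  end.

(* limit of a sequence (chosen classically; meaningful when it converges) *)
Definition lim_seq (u : nat -> R) : R :=
  epsilon (inhabits 0) (fun l => Un_cv u l).

(* value of a series sum_{k>=0} u k (meaningful when it converges) *)
Definition series_val (u : nat -> R) : R :=
  epsilon (inhabits 0) (fun l => infinite_sum u l).

Definition phi (q t : R) (n : nat) (lam : list nat) (x : R) : R :=
  lim_seq (prod_f_R0 (factor q t n lam x)).

Definition eta (n : nat) (lam : list nat) : R := INR (ell lam) - INR n.

(* A probability measure on the countable set Omega_n, given as a
   countable family of atoms a k in Omega_n with weights p k >= 0 summing to 1. *)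
Definition is_prob_measure (n : nat) (p : nat -> R) (a : nat -> list nat) : Prop :=
  (forall k, 0 <= p k) /\ (forall k, in_Omega n (a k)) /\ infinite_sum p 1.

Definition prob_eta (n : nat) (p : nat -> R) (a : nat -> list nat) (A : R -> Prop) : R :=
  series_val (fun k => p k * (if excluded_middle_informative (A (eta n (a k))) then 1 else 0)).

Definition Fexp (q t : R) (n : nat) (p : nat -> R) (a : nat -> list nat) (x : R) : R :=
  series_val (fun k => p k * phi q t n (a k) x).

(* lim_{n -> oo} sup_{x in R} g n x = 0, unfolded:
   eventually the sup is within eps of 0 (upper bound eps, some value >= -eps). *)
Definition sup_tends_to_zero (g : nat -> R -> R) : Prop :=
  forall eps, 0 < eps -> exists N, forall n, (N <= n)%nat ->
    (forall x, g n x <= eps) /\ (exists x, - eps <= g n x).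

Definition rv_spreads (p : nat -> nat -> R) (a : nat -> nat -> list nat) : Prop :=
  sup_tends_to_zero
    (fun n x => prob_eta n (p n) (a n) (fun e => x < e <= x + 1)).

Definition fun_spreads (F : nat -> R -> R) : Prop :=
  sup_tends_to_zero (fun n x => F n (x + 1) - F n x).

(* asymptotic equivalence (sequences indexed by n >= 1; index 0 is irrelevant
   for limits) *)
Definition asymp_equiv (p : nat -> nat -> R) (a : nat -> nat -> list nat)
  (F : nat -> R -> R) : Prop :=
  (rv_spreads p a <-> fun_spreads F) /\
  (rv_spreads p a -> fun_spreads F ->
     sup_tends_to_zero (fun n x => prob_eta n (p n) (a n) (fun e => e <= x) - F n x)).

(* Write m = n - ell(lambda) ([zero_parts n lam]), so that eta_n(lambda) = -m.  The
   factors of phi_{n,x}(lambda) with j < m equal 1; the others are (1 + a T) / (1 + T) with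
   a = q^{lambda_{n-j}} in [0, q] and T = t^{j+x}, hence lie between exp(-T) and 1, and are
   at most (1 + q) / 2 when T >= 1.  So phi_{n,x} is close to 1 when m + x is large (the
   remaining T's form a geometric tail) and close to 0 when m + x is very negative (many
   factors are at most (1 + q) / 2).  When -1 <= m + x <= 0, the m-th factor increases by at
   least (1 - q)(1 - t)/4 from x to x + 1, while the product of the other factors stays
   above exp(-1/(1 - t)).

   Away from x,
   phi_{n,x} is within eps of 0 or 1, so both phi_{n,x+1} and the indicator of {eta_n <= x}
   are at most phi_{n,x} + eps plus the indicators of finitely many windows of length 1
   around x; taking expectations bounds F_n(x+1) - F_n(x) and Prob{eta_n <= x} - F_n(x) by
   eps plus a multiple of sup_y Prob{y < eta_n <= y + 1}.  Conversely, condition (4) gives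
   c Prob{x < eta_n <= x + 1} <= F_n(x+1) - F_n(x). *)

From Stdlib Require Import Reals List Lra Lia Arith ClassicalEpsilon.
Open Scope R_scope.

Lemma Un_cv_const (c : R) : Un_cv (fun _ => c) c.
Proof. intros eps Heps. exists 0%nat. intros. unfold Rdist. rewrite Rminus_diag, Rabs_R0. lra. Qed.

Lemma Rle_cv_lim_eventually (u v : nat -> R) (l l' : R) (N0 : nat) :
  (forall n, (N0 <= n)%nat -> u n <= v n) -> Un_cv u l -> Un_cv v l' -> l <= l'.
Proof.
  intros Huv Hu Hv.
  apply (@Rle_cv_lim (fun n => u (n + N0)%nat) (fun n => v (n + N0)%nat));
    [intro n; apply Huv; lia | apply CV_shift' | apply CV_shift']; assumption.
Qed.

Lemma lim_seq_unique (u : nat -> R) (l : R) : Un_cv u l -> lim_seq u = l.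
Proof.
  intros Hu. apply (UL_sequence u); [|exact Hu].
  apply (epsilon_spec (inhabits 0) (fun l => Un_cv u l)). now exists l.
Qed.

Lemma series_val_sum (u : nat -> R) :
  (exists l, infinite_sum u l) -> infinite_sum u (series_val u).
Proof. exact (epsilon_spec (inhabits 0) (fun l => infinite_sum u l)). Qed.

Lemma series_val_unique (u : nat -> R) (l : R) : infinite_sum u l -> series_val u = l.
Proof. intros Hu. apply (uniqueness_sum u); [apply series_val_sum; now exists l | exact Hu]. Qed.

Lemma Rdiv_nonneg (a b : R) : 0 <= a -> 0 < b -> 0 <= a / b.
Proof. intros Ha Hb. apply Rmult_le_pos; [exact Ha | left; now apply Rinv_0_lt_compat]. Qed.

Lemma exp_le (x y : R) : x <= y -> exp x <= exp y.
Proof. intros [H|H]; [left; now apply exp_increasing | subst; lra]. Qed.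

Lemma sum_f_R0_ge_term (u : nat -> R) (K i : nat) :
  (forall j, 0 <= u j) -> (i <= K)%nat -> u i <= sum_f_R0 u K.
Proof.
  intros Hu Hi. induction K as [|K IH]; cbn [sum_f_R0].
  - replace i with 0%nat by lia. lra.
  - destruct (Nat.eq_dec i (S K)) as [->|Hne].
    + pose proof (cond_pos_sum u K Hu). lra.
    + pose proof (Hu (S K)). specialize (IH ltac:(lia)). lra.
Qed.

Lemma exists_nat_interval (K : nat) (v : R) :
  -1 < v <= INR K -> exists i, (i <= K)%nat /\ INR i - 1 < v <= INR i.
Proof.
  induction K as [|K IH]; intros Hv.
  - exists 0%nat. simpl in *. split; [lia|lra].
  - destruct (Rle_or_lt v (INR K)) as [Hle|Hgt].
    + destruct (IH (conj (proj1 Hv) Hle)) as [i [Hi Hvi]]. exists i. split; [lia|exact Hvi].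
    + exists (S K). rewrite S_INR in *. split; [lia|lra].
Qed.

(** * Expectation under a discrete probability *)

Definition bounded_nonneg (b : nat -> R) : Prop := exists C, forall k, 0 <= b k <= C.

Lemma bounded_nonneg_add (b b' : nat -> R) :
  bounded_nonneg b -> bounded_nonneg b' -> bounded_nonneg (fun k => b k + b' k).
Proof.
  intros [C HC] [C' HC']. exists (C + C'). intro k. specialize (HC k). specialize (HC' k). lra.
Qed.

Lemma bounded_nonneg_sum (g : nat -> nat -> R) (K : nat) :
  (forall i, bounded_nonneg (g i)) -> bounded_nonneg (fun k => sum_f_R0 (fun i => g i k) K).
Proof.
  intros Hg. induction K as [|K IH]; [apply Hg|].
  exact (bounded_nonneg_add _ _ IH (Hg (S K))).
Qed.

Lemma bounded_nonneg_scal (c : R) (b : nat -> R) :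
  0 <= c -> bounded_nonneg b -> bounded_nonneg (fun k => c * b k).
Proof. intros Hc [C HC]. exists (c * C). intro k. specialize (HC k). split; nra. Qed.

Section Expectation.
Variable p : nat -> R.
Hypotheses (p_ge0 : forall k, 0 <= p k) (p_sum : infinite_sum p 1).

Definition expect (b : nat -> R) : R := series_val (fun k => p k * b k).

Lemma expect_infinite_sum (b : nat -> R) :
  bounded_nonneg b -> infinite_sum (fun k => p k * b k) (expect b).
Proof.
  intros [C HC]. apply series_val_sum.
  assert (HC0 : 0 <= C) by (destruct (HC 0%nat); lra).
  assert (Hp1 : forall N, sum_f_R0 p N <= 1).
  { intro N. apply (growing_ineq (sum_f_R0 p)); [|exact p_sum].
    intro K. cbn [sum_f_R0]. pose proof (p_ge0 (S K)). lra. }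
  destruct (growing_cv (sum_f_R0 (fun k => p k * b k))) as [l Hl].
  - intro K. cbn [sum_f_R0]. pose proof (p_ge0 (S K)). pose proof (HC (S K)). nra.
  - exists C. intros r [N ->].
    apply Rle_trans with (sum_f_R0 (fun k => p k * C) N).
    + apply sum_Rle. intros k _. pose proof (p_ge0 k). pose proof (HC k). nra.
    + rewrite <- scal_sum. pose proof (Hp1 N). nra.
  - now exists l.
Qed.

Lemma expect_unique (b : nat -> R) (l : R) : infinite_sum (fun k => p k * b k) l -> expect b = l.
Proof. apply series_val_unique. Qed.

Lemma expect_le_compat (b b' : nat -> R) : bounded_nonneg b -> bounded_nonneg b' ->
  (forall k, b k <= b' k) -> expect b <= expect b'.
Proof.
  intros Hb Hb' Hbb'.
  refine (Rle_cv_lim _ (expect_infinite_sum b Hb) (expect_infinite_sum b' Hb')).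
  intro N. apply sum_Rle. intros k _. pose proof (p_ge0 k). pose proof (Hbb' k). nra.
Qed.

Lemma expect_add (b b' : nat -> R) : bounded_nonneg b -> bounded_nonneg b' ->
  expect (fun k => b k + b' k) = expect b + expect b'.
Proof.
  intros Hb Hb'. apply expect_unique.
  apply (Un_cv_ext (fun N => sum_f_R0 (fun k => p k * b k) N + sum_f_R0 (fun k => p k * b' k) N)).
  - intro N. rewrite <- plus_sum. apply sum_eq. intros. ring.
  - apply CV_plus; apply expect_infinite_sum; assumption.
Qed.

Lemma expect_scal (c : R) (b : nat -> R) : bounded_nonneg b ->
  expect (fun k => c * b k) = c * expect b.
Proof.
  intros Hb. apply expect_unique.
  apply (Un_cv_ext (fun N => c * sum_f_R0 (fun k => p k * b k) N)).
  - intro N. rewrite scal_sum. apply sum_eq. intros. ring.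
  - apply CV_mult; [apply Un_cv_const | apply expect_infinite_sum, Hb].
Qed.

Lemma expect_const (c : R) : expect (fun _ => c) = c.
Proof.
  apply expect_unique.
  apply (Un_cv_ext (fun N => c * sum_f_R0 p N)).
  - intro N. rewrite scal_sum. apply sum_eq. intros. ring.
  - pose proof (CV_mult _ _ _ _ (Un_cv_const c) p_sum) as Hc. rewrite Rmult_1_r in Hc. exact Hc.
Qed.

Lemma expect_ge0 (b : nat -> R) : bounded_nonneg b -> 0 <= expect b.
Proof.
  intros Hb. rewrite <- (expect_const 0).
  apply expect_le_compat; [exists 0; intro; lra | exact Hb |].
  intro k. destruct Hb as [C HC]. apply HC.
Qed.

Lemma expect_sum_f_R0 (g : nat -> nat -> R) (K : nat) : (forall i, bounded_nonneg (g i)) ->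
  expect (fun k => sum_f_R0 (fun i => g i k) K) = sum_f_R0 (fun i => expect (g i)) K.
Proof.
  intros Hg. induction K as [|K IH]; [reflexivity|]. cbn [sum_f_R0].
  rewrite <- IH. apply (expect_add (fun k => sum_f_R0 (fun i => g i k) K) (g (S K))).
  - apply bounded_nonneg_sum, Hg.
  - apply Hg.
Qed.

End Expectation.

(** * Conditions (1)-(4) imply asymptotic equivalence *)

Lemma split_eps_window (eps : R) (K : nat) : 0 < eps ->
  0 < eps / (2 * INR (S K)) /\ INR (S K) * (eps / (2 * INR (S K))) = eps / 2.
Proof.
  intros Heps. pose proof (lt_0_INR (S K) (Nat.lt_0_succ K)).
  split; [apply Rdiv_lt_0_compat; lra | field; lra].
Qed.

Lemma eta_ge (n : nat) (lam : list nat) : - INR n <= eta n lam.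
Proof. unfold eta. pose proof (pos_INR (ell lam)). lra. Qed.

Definition ind_eta (n : nat) (an : nat -> list nat) (A : R -> Prop) (k : nat) : R :=
  if excluded_middle_informative (A (eta n (an k))) then 1 else 0.

Lemma ind_eta_bounds (n : nat) (an : nat -> list nat) (A : R -> Prop) (k : nat) :
  0 <= ind_eta n an A k <= 1.
Proof. unfold ind_eta. destruct excluded_middle_informative; lra. Qed.

Lemma bounded_nonneg_ind_eta (n : nat) (an : nat -> list nat) (A : R -> Prop) :
  bounded_nonneg (ind_eta n an A).
Proof. exists 1. apply ind_eta_bounds. Qed.

Lemma prob_eta_expect (n : nat) (pn : nat -> R) (an : nat -> list nat) (A : R -> Prop) :
  prob_eta n pn an A = expect pn (ind_eta n an A).
Proof. reflexivity. Qed.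

Definition window (n : nat) (an : nat -> list nat) (x M : R) (K k : nat) : R :=
  sum_f_R0 (fun i => ind_eta n an
    (fun e => x - M - 1 + INR i < e <= x - M - 1 + INR i + 1) k) K.

Lemma window_ge0 (n : nat) (an : nat -> list nat) (x M : R) (K k : nat) :
  0 <= window n an x M K k.
Proof. apply cond_pos_sum. intro i. apply ind_eta_bounds. Qed.

Lemma window_ge_1 (n : nat) (an : nat -> list nat) (x M : R) (K k : nat) :
  0 <= M -> 2 * M + 1 <= INR K -> - M <= eta n (an k) - x <= M + 1 ->
  1 <= window n an x M K k.
Proof.
  intros HM HK Hx.
  destruct (exists_nat_interval K (eta n (an k) - x + M)) as [i [HiK Hi]]; [lra|].
  eapply Rle_trans;
    [|apply (sum_f_R0_ge_term (fun i => ind_eta n an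
            (fun e => x - M - 1 + INR i < e <= x - M - 1 + INR i + 1) k) K i
            (fun j => proj1 (ind_eta_bounds _ _ _ _)) HiK)].
  unfold ind_eta. destruct excluded_middle_informative as [_|Hout]; [lra|].
  exfalso. apply Hout. lra.
Qed.

Definition asymp_equiv_conditions (psi : nat -> list nat -> R -> R) : Prop :=
  (forall n lam x y, (1 <= n)%nat -> in_Omega n lam -> x <= y ->
     0 <= psi n lam x /\ psi n lam x <= psi n lam y /\ psi n lam y <= 1) /\
  (forall eps, 0 < eps -> exists M, forall n lam x, (1 <= n)%nat -> in_Omega n lam ->
     eta n lam - x > M -> psi n lam x < eps) /\
  (forall eps, 0 < eps -> exists M, forall n lam x, (1 <= n)%nat -> in_Omega n lam ->
     eta n lam - x < - M -> psi n lam x > 1 - eps) /\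
  (exists c, 0 < c /\ forall n lam x, (1 <= n)%nat -> in_Omega n lam ->
     x < eta n lam <= x + 1 -> psi n lam (x + 1) - psi n lam x >= c).

Section ConditionsImplyAsympEquiv.
Variable psi : nat -> list nat -> R -> R.
Hypothesis psi_conditions : asymp_equiv_conditions psi.

Let psi_mono := proj1 psi_conditions.
Let psi_small := proj1 (proj2 psi_conditions).
Let psi_large := proj1 (proj2 (proj2 psi_conditions)).
Let psi_jump := proj2 (proj2 (proj2 psi_conditions)).

Lemma psi_bounds n lam x : (1 <= n)%nat -> in_Omega n lam -> 0 <= psi n lam x <= 1.
Proof. intros Hn HO. destruct (psi_mono n lam x x Hn HO (Rle_refl x)). lra. Qed.

Lemma le_psi_add_window (eps : R) : 0 < eps -> exists M K, forall n an x k b,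
  (1 <= n)%nat -> in_Omega n (an k) -> 0 <= b <= 1 ->
  (b <= psi n (an k) (x + 1) \/ eta n (an k) <= x) ->
  b <= psi n (an k) x + eps + window n an x M K k.
Proof.
  intros Heps. destruct (psi_small eps Heps) as [Ms Hs]. destruct (psi_large eps Heps) as [Ml Hl].
  set (M := Rmax 0 (Rmax Ms Ml)).
  assert (HM : 0 <= M /\ Ms <= M /\ Ml <= M).
  { unfold M. repeat split; [apply Rmax_l | |];
      (eapply Rle_trans; [|apply Rmax_r]); [apply Rmax_l | apply Rmax_r]. }
  destruct (INR_archimed 1 (2 * M + 1)) as [K HK]; [lra|].
  exists M, K. intros n an x k b Hn HO Hb Hcase.
  pose proof (psi_bounds n (an k) x Hn HO). pose proof (window_ge0 n an x M K k).
  destruct (Rlt_or_le (eta n (an k) - x) (- M)) as [Hlow|Hlow].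
  { pose proof (Hl n (an k) x Hn HO ltac:(lra)). lra. }
  destruct (Rlt_or_le (M + 1) (eta n (an k) - x)) as [Hhigh|Hhigh].
  { pose proof (Hs n (an k) (x + 1) Hn HO ltac:(lra)). destruct Hcase; lra. }
  pose proof (window_ge_1 n an x M K k ltac:(lra) ltac:(lra) (conj Hlow Hhigh)). lra.
Qed.

Variables (p : nat -> nat -> R) (a : nat -> nat -> list nat).
Hypothesis p_prob : forall n, (1 <= n)%nat -> is_prob_measure n (p n) (a n).

Let F (n : nat) (x : R) : R := expect (p n) (fun k => psi n (a n k) x).

Lemma bounded_nonneg_psi n x : (1 <= n)%nat -> bounded_nonneg (fun k => psi n (a n k) x).
Proof.
  intros Hn. destruct (p_prob n Hn) as [_ [HO _]]. exists 1. intro k. apply psi_bounds; auto.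
Qed.

Lemma F_le_compat n x y : (1 <= n)%nat -> x <= y -> F n x <= F n y.
Proof.
  intros Hn Hxy. destruct (p_prob n Hn) as [Hp [HO Hs]].
  apply expect_le_compat; auto using bounded_nonneg_psi.
  intro k. apply psi_mono; auto.
Qed.

Lemma expect_le_F_add (eps : R) : 0 < eps -> exists K, forall n x d b, (1 <= n)%nat ->
  (forall y, prob_eta n (p n) (a n) (fun e => y < e <= y + 1) <= d) ->
  (forall k, 0 <= b k <= 1) -> (forall k, b k <= psi n (a n k) (x + 1) \/ eta n (a n k) <= x) ->
  expect (p n) b <= F n x + eps + INR (S K) * d.
Proof.
  intros Heps. destruct (le_psi_add_window eps Heps) as [M [K HMK]].
  exists K. intros n x d b Hn Hd Hb Hcase. destruct (p_prob n Hn) as [Hp [HO Hs]].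
  set (ind i := ind_eta n (a n) (fun e => x - M - 1 + INR i < e <= x - M - 1 + INR i + 1)).
  assert (Hwin : bounded_nonneg (fun k => sum_f_R0 (fun i => ind i k) K))
    by (apply bounded_nonneg_sum; intro; apply bounded_nonneg_ind_eta).
  assert (Hpsi : bounded_nonneg (fun k => psi n (a n k) x + eps)).
  { apply bounded_nonneg_add; [apply bounded_nonneg_psi, Hn | exists eps; intro; lra]. }
  apply Rle_trans with
    (expect (p n) (fun k => (psi n (a n k) x + eps) + sum_f_R0 (fun i => ind i k) K)).
  - apply expect_le_compat;
      [exact Hp | exact Hs | exists 1; exact Hb | apply bounded_nonneg_add; assumption |].
    intro k. apply HMK; auto.
  - rewrite (expect_add (p n) Hp Hs _ _ Hpsi Hwin).
    rewrite (expect_add (p n) Hp Hs (fun k => psi n (a n k) x) (fun _ => eps));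
      [|apply bounded_nonneg_psi, Hn | exists eps; intro; lra].
    rewrite (expect_const (p n) Hs), (expect_sum_f_R0 (p n) Hp Hs ind);
      [|intro; apply bounded_nonneg_ind_eta].
    rewrite Rmult_comm, <- sum_cte. apply Rplus_le_compat_l, sum_Rle. intros i _. apply Hd.
Qed.

Lemma prob_interval_le_F_sub : exists c, 0 < c /\ forall n x, (1 <= n)%nat ->
  c * prob_eta n (p n) (a n) (fun e => x < e <= x + 1) <= F n (x + 1) - F n x.
Proof.
  destruct psi_jump as [c [Hc Hjump]]. exists c. split; [exact Hc|].
  intros n x Hn. destruct (p_prob n Hn) as [Hp [HO Hs]].
  set (ind := ind_eta n (a n) (fun e => x < e <= x + 1)).
  rewrite prob_eta_expect. fold ind.
  rewrite <- (expect_scal (p n) Hp Hs c ind (bounded_nonneg_ind_eta _ _ _)).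
  assert (Hcind : bounded_nonneg (fun k => c * ind k))
    by (apply bounded_nonneg_scal; [lra | apply bounded_nonneg_ind_eta]).
  enough (Hle : expect (p n) (fun k => psi n (a n k) x + c * ind k) <= F n (x + 1)).
  { rewrite (expect_add (p n) Hp Hs _ _ (bounded_nonneg_psi n x Hn) Hcind) in Hle.
    unfold F in *. lra. }
  apply expect_le_compat; [exact Hp | exact Hs | | apply bounded_nonneg_psi, Hn |].
  - apply bounded_nonneg_add; [apply bounded_nonneg_psi, Hn | exact Hcind].
  - intro k. unfold ind, ind_eta. destruct excluded_middle_informative as [Hin|_].
    + pose proof (Hjump n (a n k) x Hn (HO k) Hin). lra.
    + rewrite Rmult_0_r, Rplus_0_r. apply psi_mono; auto. lra.
Qed.

Lemma exists_F_le (eps : R) : 0 < eps -> forall n, (1 <= n)%nat -> exists x, F n x <= eps.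
Proof.
  intros Heps n Hn. destruct (psi_small eps Heps) as [M HM]. destruct (p_prob n Hn) as [Hp [HO Hs]].
  exists (- INR n - M - 1).
  rewrite <- (expect_const (p n) Hs eps).
  apply expect_le_compat; auto using bounded_nonneg_psi; [exists eps; intro; lra|].
  intro k. left. apply HM; auto. pose proof (eta_ge n (a n k)). lra.
Qed.

Lemma fun_spreads_of_rv_spreads : rv_spreads p a -> fun_spreads F.
Proof.
  intros Hrv eps Heps. destruct (expect_le_F_add (eps / 2)) as [K HK]; [lra|].
  destruct (split_eps_window eps K Heps) as [Hd0 HdK]. destruct (Hrv _ Hd0) as [N HN].
  exists (max N 1). intros n Hn. split.
  - intro x.
    enough (F n (x + 1) <= F n x + eps / 2 + INR (S K) * (eps / (2 * INR (S K)))) by lra.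
    apply HK; [lia | intro y; apply (HN n ltac:(lia)) | | intro k; now left].
    intro k. apply psi_bounds; [lia | apply (p_prob n ltac:(lia))].
  - exists 0. pose proof (F_le_compat n 0 (0 + 1) ltac:(lia) ltac:(lra)). lra.
Qed.

Lemma rv_spreads_of_fun_spreads : fun_spreads F -> rv_spreads p a.
Proof.
  intros Hf eps Heps. destruct prob_interval_le_F_sub as [c [Hc Hjump]].
  destruct (Hf (c * eps) ltac:(nra)) as [N HN]. exists (max N 1). intros n Hn.
  destruct (p_prob n ltac:(lia)) as [Hp [_ Hs]]. split.
  - intro x. pose proof (Hjump n x ltac:(lia)). pose proof (proj1 (HN n ltac:(lia)) x).
    apply Rmult_le_reg_l with c; lra.
  - exists 0. rewrite prob_eta_expect.
    pose proof (expect_ge0 (p n) Hp Hs _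
                  (bounded_nonneg_ind_eta n (a n) (fun e => 0 < e <= 0 + 1))).
    lra.
Qed.

Lemma cdf_sub_F_tends_to_zero : rv_spreads p a ->
  sup_tends_to_zero (fun n x => prob_eta n (p n) (a n) (fun e => e <= x) - F n x).
Proof.
  intros Hrv eps Heps. destruct (expect_le_F_add (eps / 2)) as [K HK]; [lra|].
  destruct (split_eps_window eps K Heps) as [Hd0 HdK]. destruct (Hrv _ Hd0) as [N HN].
  exists (max N 1). intros n Hn. destruct (p_prob n ltac:(lia)) as [Hp [HO Hs]]. split.
  - intro x. rewrite prob_eta_expect.
    enough (expect (p n) (ind_eta n (a n) (fun e => e <= x)) <=
            F n x + eps / 2 + INR (S K) * (eps / (2 * INR (S K)))) by lra.
    apply HK; [lia | intro y; apply (HN n ltac:(lia)) | intro k; apply ind_eta_bounds |].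
    intro k. unfold ind_eta. destruct excluded_middle_informative as [Hle|_]; [now right|].
    left. apply psi_bounds; auto. lia.
  - destruct (exists_F_le eps Heps n ltac:(lia)) as [x Hx]. exists x. rewrite prob_eta_expect.
    pose proof (expect_ge0 (p n) Hp Hs _ (bounded_nonneg_ind_eta n (a n) (fun e => e <= x))).
    lra.
Qed.

Theorem asymp_equiv_of_conditions :
  (forall n x y, (1 <= n)%nat -> x <= y -> F n x <= F n y) /\ asymp_equiv p a F.
Proof.
  split; [exact F_le_compat|]. split; [split|].
  - exact fun_spreads_of_rv_spreads.
  - exact rv_spreads_of_fun_spreads.
  - intros Hrv _. exact (cdf_sub_F_tends_to_zero Hrv).
Qed.

End ConditionsImplyAsympEquiv.

Section FiniteProducts.
Implicit Types (f g u : nat -> R) (N : nat).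

Lemma prod_f_R0_ext f g N :
  (forall j, (j <= N)%nat -> f j = g j) -> prod_f_R0 f N = prod_f_R0 g N.
Proof.
  induction N as [|N IH]; intros Hfg; cbn [prod_f_R0].
  - apply Hfg; lia.
  - rewrite IH, (Hfg (S N)); [reflexivity | lia | intros; apply Hfg; lia].
Qed.

Lemma prod_f_R0_ge0 f N : (forall j, 0 <= f j) -> 0 <= prod_f_R0 f N.
Proof. intros Hf. induction N; cbn [prod_f_R0]; auto using Rmult_le_pos. Qed.

Lemma prod_f_R0_le_compat f g N :
  (forall j, 0 <= f j <= g j) -> prod_f_R0 f N <= prod_f_R0 g N.
Proof.
  intros Hfg. induction N as [|N IH]; cbn [prod_f_R0]; [apply Hfg|].
  apply Rmult_le_compat; [apply prod_f_R0_ge0; intro j; apply Hfg | apply Hfg | exact IH |].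
  apply Hfg.
Qed.

Lemma prod_f_R0_le_1 f N : (forall j, 0 <= f j <= 1) -> prod_f_R0 f N <= 1.
Proof.
  intros Hf. induction N as [|N IH]; cbn [prod_f_R0]; [apply Hf|].
  pose proof (prod_f_R0_ge0 f N (fun j => proj1 (Hf j))). pose proof (Hf (S N)). nra.
Qed.

Lemma prod_f_R0_le_last f N : (forall j, 0 <= f j <= 1) -> prod_f_R0 f N <= f N.
Proof.
  intros Hf. destruct N as [|N]; cbn [prod_f_R0]; [lra|].
  pose proof (prod_f_R0_le_1 f N Hf). pose proof (Hf (S N)). nra.
Qed.

Lemma prod_f_R0_decreasing f : (forall j, 0 <= f j <= 1) -> Un_decreasing (prod_f_R0 f).
Proof.
  intros Hf N. cbn [prod_f_R0].
  pose proof (prod_f_R0_ge0 f N (fun j => proj1 (Hf j))). pose proof (Hf (S N)). nra.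
Qed.

Lemma exp_opp_sum_le_prod_f_R0 f u N :
  (forall j, exp (- u j) <= f j) -> exp (- sum_f_R0 u N) <= prod_f_R0 f N.
Proof.
  intros Hf. induction N as [|N IH]; cbn [prod_f_R0 sum_f_R0]; [apply Hf|].
  rewrite Ropp_plus_distr, exp_plus.
  apply Rmult_le_compat; auto; left; apply exp_pos.
Qed.

Lemma prod_f_R0_le_pow f (r : R) (m K : nat) :
  (forall j, 0 <= f j <= 1) -> (forall j, (m <= j <= m + K)%nat -> f j <= r) ->
  prod_f_R0 f (m + K) <= r ^ S K.
Proof.
  intros Hf Hr. induction K as [|K IH].
  - rewrite Nat.add_0_r, pow_1. eapply Rle_trans; [apply prod_f_R0_le_last, Hf|]. apply Hr; lia.
  - rewrite Nat.add_succ_r. cbn [prod_f_R0].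
    replace (r ^ S (S K)) with (r ^ S K * r) by (simpl; ring).
    apply Rmult_le_compat; [apply prod_f_R0_ge0; apply Hf | apply Hf | apply IH | apply Hr];
      intros; try apply Hr; lia.
Qed.

Lemma prod_f_R0_update f (a : R) (m N : nat) : (m <= N)%nat ->
  prod_f_R0 (fun j => if Nat.eq_dec j m then a else f j) N =
  a * prod_f_R0 (fun j => if Nat.eq_dec j m then 1 else f j) N.
Proof.
  induction N as [|N IH]; intros HmN; cbn [prod_f_R0].
  - replace m with 0%nat by lia. destruct (Nat.eq_dec 0 0); [ring|congruence].
  - destruct (Nat.eq_dec (S N) m) as [<-|Hne].
    + destruct (Nat.eq_dec (S N) (S N)) as [_|]; [|congruence].
      assert (Hoff : forall b, prod_f_R0 (fun j => if Nat.eq_dec j (S N) then b else f j) N =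
                               prod_f_R0 f N).
      { intro b. apply prod_f_R0_ext. intros j Hj.
        destruct (Nat.eq_dec j (S N)); [lia|reflexivity]. }
      rewrite !Hoff. ring.
    + destruct (Nat.eq_dec (S N) m); [congruence|]. rewrite IH by lia. ring.
Qed.

Lemma prod_f_R0_sub_ge f g (m N : nat) :
  (forall j, 0 <= f j <= g j) -> (forall j, g j <= 1) -> (m <= N)%nat ->
  (g m - f m) * prod_f_R0 g N <= prod_f_R0 g N - prod_f_R0 f N.
Proof.
  intros Hfg Hg1 HmN.
  set (G := prod_f_R0 (fun j => if Nat.eq_dec j m then 1 else g j) N).
  assert (HgG : prod_f_R0 g N = g m * G).
  { unfold G. rewrite <- prod_f_R0_update by exact HmN.
    apply prod_f_R0_ext. intros j _. destruct (Nat.eq_dec j m) as [->|]; reflexivity. }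
  assert (HfG : prod_f_R0 f N <= f m * G).
  { unfold G. rewrite <- prod_f_R0_update by exact HmN.
    apply prod_f_R0_le_compat. intro j.
    destruct (Nat.eq_dec j m) as [->|]; split; try lra; apply Hfg. }
  assert (HG : prod_f_R0 g N <= G).
  { apply prod_f_R0_le_compat. intro j. destruct (Nat.eq_dec j m); split; try lra;
      [pose proof (Hfg j); lra | apply Hg1 | pose proof (Hfg j); lra]. }
  pose proof (Hfg m). nra.
Qed.

End FiniteProducts.

(** * Factors (1 + a T) / (1 + T) and powers of t *)

Definition fac (a T : R) : R := (1 + a * T) / (1 + T).

Lemma fac_1 (T : R) : 0 < T -> fac 1 T = 1.
Proof. intros HT. unfold fac. field. lra. Qed.

Lemma fac_bounds (a T : R) : 0 <= a <= 1 -> 0 < T -> 0 <= fac a T <= 1.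
Proof.
  intros Ha HT. unfold fac. split.
  - apply Rdiv_nonneg; nra.
  - apply Rmult_le_reg_r with (1 + T); [lra|].
    unfold Rdiv. rewrite Rmult_assoc, Rinv_l by lra. nra.
Qed.

Lemma exp_opp_le_fac (a T : R) : 0 <= a -> 0 < T -> exp (- T) <= fac a T.
Proof.
  intros Ha HT. unfold fac. rewrite exp_Ropp.
  pose proof (exp_ineq1_le T).
  apply Rle_trans with (/ (1 + T)); [apply Rinv_le_contravar; lra|].
  unfold Rdiv. rewrite <- (Rmult_1_l (/ (1 + T))) at 1.
  apply Rmult_le_compat_r; [left; apply Rinv_0_lt_compat|]; nra.
Qed.

Lemma fac_antimonotone (a T T' : R) : 0 <= a <= 1 -> 0 < T' <= T -> fac a T <= fac a T'.
Proof.
  intros Ha HT. unfold fac.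
  assert (E : (1 + a * T') / (1 + T') - (1 + a * T) / (1 + T) =
              (1 - a) * (T - T') / ((1 + T') * (1 + T))) by (field; lra).
  enough (0 <= (1 - a) * (T - T') / ((1 + T') * (1 + T))) by lra.
  apply Rdiv_nonneg; nra.
Qed.

Lemma fac_le_mid (a q T : R) : 0 <= a <= q -> q <= 1 -> 1 <= T -> fac a T <= (1 + q) / 2.
Proof.
  intros Ha Hq HT. unfold fac.
  assert (E : (1 + q) / 2 - (1 + a * T) / (1 + T) =
              ((1 - q) * (T - 1) + 2 * (q - a) * T) / (2 * (1 + T))) by (field; lra).
  enough (0 <= ((1 - q) * (T - 1) + 2 * (q - a) * T) / (2 * (1 + T))) by lra.
  apply Rdiv_nonneg; nra.
Qed.

Lemma fac_jump (a q t T : R) : 0 <= a <= q -> q <= 1 -> 0 < t < 1 -> 1 <= T -> t * T <= 1 ->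
  (1 - q) * (1 - t) / 4 <= fac a (t * T) - fac a T.
Proof.
  intros Ha Hq Ht HT HtT. unfold fac.
  assert (E : (1 + a * (t * T)) / (1 + t * T) - (1 + a * T) / (1 + T) =
              (1 - a) * (1 - t) * (T / ((1 + t * T) * (1 + T)))) by (field; nra).
  assert (Hquarter : / 4 <= T / ((1 + t * T) * (1 + T))).
  { (* [1 + t T <= 2] and [1 + T <= 2 T] *)
    assert (HD : (1 + t * T) * (1 + T) <= 4 * T) by nra.
    replace (T / ((1 + t * T) * (1 + T))) with
      (/ 4 + (4 * T - (1 + t * T) * (1 + T)) / (4 * ((1 + t * T) * (1 + T)))) by (field; nra).
    enough (0 <= (4 * T - (1 + t * T) * (1 + T)) / (4 * ((1 + t * T) * (1 + T)))) by lra.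
    apply Rdiv_nonneg; nra. }
  rewrite E. set (Y := T / ((1 + t * T) * (1 + T))) in *.
  assert (0 <= (1 - q) * (1 - t) <= (1 - a) * (1 - t)) by (split; nra).
  nra.
Qed.

Definition tpow (t : R) (j : nat) (x : R) : R := Rpower t (INR j + x).

Lemma Rpower_antimonotone (t z z' : R) : 0 < t < 1 -> z <= z' -> Rpower t z' <= Rpower t z.
Proof.
  intros Ht Hz. unfold Rpower. apply exp_le.
  assert (ln t < 0) by (rewrite <- ln_1; apply ln_increasing; lra). nra.
Qed.

Lemma Rpower_le_1 (t z : R) : 0 < t < 1 -> 0 <= z -> Rpower t z <= 1.
Proof. intros Ht Hz. rewrite <- (Rpower_O t) by lra. now apply Rpower_antimonotone. Qed.

Lemma Rpower_ge_1 (t z : R) : 0 < t < 1 -> z <= 0 -> 1 <= Rpower t z.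
Proof. intros Ht Hz. rewrite <- (Rpower_O t) by lra. now apply Rpower_antimonotone. Qed.

Lemma tpow_pos (t : R) (j : nat) (x : R) : 0 < tpow t j x.
Proof. apply exp_pos. Qed.

Lemma tpow_S (t : R) (j : nat) (x : R) : 0 < t -> tpow t (S j) x = t * tpow t j x.
Proof.
  intros Ht. unfold tpow. rewrite S_INR.
  replace (INR j + 1 + x) with (1 + (INR j + x)) by ring.
  rewrite Rpower_plus, Rpower_1 by exact Ht. reflexivity.
Qed.

Lemma sum_f_R0_geometric_tail (t : R) (v : nat -> R) (m N : nat) :
  t < 1 -> (forall j, 0 <= v j) -> (forall j, v (S j) = t * v j) ->
  sum_f_R0 (fun j => if (m <=? j)%nat then v j else 0) N <= v m / (1 - t).
Proof.
  intros Ht Hv Hvs.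
  assert (E : (1 - t) * sum_f_R0 (fun j => if (m <=? j)%nat then v j else 0) N =
              if (m <=? N)%nat then v m - v (S N) else 0).
  { induction N as [|N IH]; cbn [sum_f_R0].
    - destruct (m <=? 0)%nat eqn:Hm; [|ring].
      apply Nat.leb_le in Hm. replace m with 0%nat by lia. rewrite (Hvs 0%nat). ring.
    - rewrite Rmult_plus_distr_l, IH, (Hvs (S N)).
      destruct (m <=? N)%nat eqn:Hm; destruct (m <=? S N)%nat eqn:HmS;
        apply Nat.leb_le in Hm || apply Nat.leb_gt in Hm;
        apply Nat.leb_le in HmS || apply Nat.leb_gt in HmS; try lia.
      + ring.
      + replace m with (S N) by lia. ring.
      + ring. }
  apply Rmult_le_reg_l with (1 - t); [lra|].
  replace ((1 - t) * (v m / (1 - t))) with (v m) by (field; lra).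
  rewrite E. pose proof (Hv (S N)). pose proof (Hv m). destruct (m <=? N)%nat; lra.
Qed.

(** * Conditions (1)-(4) for phi *)

Definition zero_parts (n : nat) (lam : list nat) : nat := n - ell lam.

Lemma eta_in_Omega (n : nat) (lam : list nat) :
  in_Omega n lam -> eta n lam = - INR (zero_parts n lam).
Proof. intros [_ Hl]. unfold eta, zero_parts. rewrite minus_INR by exact Hl. ring. Qed.

Section Phi.
Variables q t : R.
Hypotheses (Hq : 0 <= q < 1) (Ht : 0 < t < 1).
Implicit Types (n j N : nat) (lam : list nat) (x y : R).

Lemma qpow_eq_1 n lam j : (j < zero_parts n lam)%nat -> qpow q n lam j = 1.
Proof.
  unfold zero_parts, qpow, part, ell. intros Hj.
  replace (Nat.ltb j n) with true by (symmetry; apply Nat.ltb_lt; lia).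
  rewrite nth_overflow by lia. reflexivity.
Qed.

Lemma qpow_le_q n lam j : in_Omega n lam -> (zero_parts n lam <= j)%nat ->
  0 <= qpow q n lam j <= q.
Proof.
  intros [[_ Hpos] Hl] Hj. unfold qpow. destruct (Nat.ltb j n) eqn:Hjn; [|lra].
  apply Nat.ltb_lt in Hjn. unfold part, zero_parts, ell in *.
  assert (Hin : In (nth (n - j - 1) lam 0%nat) lam) by (apply nth_In; lia).
  rewrite Forall_forall in Hpos. specialize (Hpos _ Hin).
  destruct (nth (n - j - 1) lam 0%nat) as [|k]; [lia|].
  assert (0 <= q ^ k <= 1) by (split; [apply pow_le | rewrite <- (pow1 k); apply pow_incr]; lra).
  simpl. split; nra.
Qed.

Lemma qpow_bounds n lam j : in_Omega n lam -> 0 <= qpow q n lam j <= 1.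
Proof.
  intros HO. destruct (le_lt_dec (zero_parts n lam) j) as [Hj|Hj].
  - pose proof (qpow_le_q n lam j HO Hj). lra.
  - rewrite qpow_eq_1 by exact Hj. lra.
Qed.

Lemma factor_eq_fac n lam x j : factor q t n lam x j = fac (qpow q n lam j) (tpow t j x).
Proof. reflexivity. Qed.

Lemma factor_bounds n lam x j : in_Omega n lam -> 0 <= factor q t n lam x j <= 1.
Proof. intros HO. apply fac_bounds; [apply qpow_bounds, HO | apply tpow_pos]. Qed.

Lemma factor_le_compat n lam x y j : in_Omega n lam -> x <= y ->
  factor q t n lam x j <= factor q t n lam y j.
Proof.
  intros HO Hxy. apply fac_antimonotone; [apply qpow_bounds, HO|].
  split; [apply tpow_pos | apply Rpower_antimonotone; lra].
Qed.

Lemma prod_factor_ge_exp n lam x N : in_Omega n lam ->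
  exp (- (tpow t (zero_parts n lam) x / (1 - t))) <= prod_f_R0 (factor q t n lam x) N.
Proof.
  intros HO. set (m := zero_parts n lam).
  set (u j := if (m <=? j)%nat then tpow t j x else 0).
  apply Rle_trans with (exp (- sum_f_R0 u N)).
  - apply exp_le, Ropp_le_contravar, sum_f_R0_geometric_tail; [lra | |].
    + intro j. left. apply tpow_pos.
    + intro j. apply tpow_S. lra.
  - apply exp_opp_sum_le_prod_f_R0. intro j. unfold u.
    destruct (m <=? j)%nat eqn:Hj.
    + apply exp_opp_le_fac; [apply qpow_bounds, HO | apply tpow_pos].
    + apply Nat.leb_gt in Hj.
      rewrite factor_eq_fac, qpow_eq_1, fac_1 by (apply tpow_pos || exact Hj).
      rewrite Ropp_0, exp_0. lra.
Qed.

Lemma phi_cv n lam x : in_Omega n lam ->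
  Un_cv (prod_f_R0 (factor q t n lam x)) (phi q t n lam x).
Proof.
  intros HO.
  assert (Hf : forall j, 0 <= factor q t n lam x j <= 1) by (intro; apply factor_bounds, HO).
  destruct (decreasing_cv _ (prod_f_R0_decreasing _ Hf)) as [l Hl].
  { exists 0. intros r [i ->]. unfold opp_seq.
    pose proof (prod_f_R0_ge0 _ i (fun j => proj1 (Hf j))). lra. }
  replace (phi q t n lam x) with l; [exact Hl | symmetry; exact (lim_seq_unique _ l Hl)].
Qed.

Lemma phi_le_prod n lam x N : in_Omega n lam ->
  phi q t n lam x <= prod_f_R0 (factor q t n lam x) N.
Proof.
  intros HO. apply decreasing_ineq; [|apply phi_cv, HO].
  apply prod_f_R0_decreasing. intro j. apply factor_bounds, HO.
Qed.

Lemma phi_ge_exp n lam x : in_Omega n lam ->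
  exp (- (tpow t (zero_parts n lam) x / (1 - t))) <= phi q t n lam x.
Proof.
  intros HO. eapply (Rle_cv_lim_eventually _ _ _ _ 0%nat); [| apply Un_cv_const | apply phi_cv, HO].
  intros N _. apply prod_factor_ge_exp, HO.
Qed.

Lemma phi_bounds n lam x : in_Omega n lam -> 0 <= phi q t n lam x <= 1.
Proof.
  intros HO. split.
  - eapply Rle_trans; [left; apply exp_pos | apply phi_ge_exp, HO].
  - eapply Rle_trans; [apply (phi_le_prod n lam x 0%nat), HO | apply factor_bounds, HO].
Qed.

Lemma phi_le_compat n lam x y : in_Omega n lam -> x <= y ->
  phi q t n lam x <= phi q t n lam y.
Proof.
  intros HO Hxy. eapply (Rle_cv_lim_eventually _ _ _ _ 0%nat); [|apply phi_cv, HO ..].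
  intros N _. apply prod_f_R0_le_compat. intro j.
  split; [apply factor_bounds, HO | apply factor_le_compat; assumption].
Qed.

(* the factors with index [j] in [zero_parts, zero_parts + K] have [t^(j+x) >= 1] *)
Lemma phi_le_pow n lam x (K : nat) : in_Omega n lam ->
  INR (zero_parts n lam) + INR K + x <= 0 -> phi q t n lam x <= ((1 + q) / 2) ^ S K.
Proof.
  intros HO HK. set (m := zero_parts n lam) in *.
  eapply Rle_trans; [apply (phi_le_prod n lam x (m + K)), HO|].
  apply prod_f_R0_le_pow; [intro j; apply factor_bounds, HO|].
  intros j Hj. apply fac_le_mid; [apply qpow_le_q; [exact HO | lia] | lra |].
  apply Rpower_ge_1; [exact Ht|].
  assert (INR j <= INR (m + K)) by (apply le_INR; lia). rewrite plus_INR in *. lra.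
Qed.

Definition jump_const : R := (1 - q) * (1 - t) / 4 * exp (- (1 / (1 - t))).

Lemma jump_const_pos : 0 < jump_const.
Proof. unfold jump_const. apply Rmult_lt_0_compat; [|apply exp_pos]. nra. Qed.

Lemma phi_jump n lam x : in_Omega n lam -> -1 <= INR (zero_parts n lam) + x <= 0 ->
  jump_const <= phi q t n lam (x + 1) - phi q t n lam x.
Proof.
  intros HO Hx. set (m := zero_parts n lam) in *.
  set (f := factor q t n lam x). set (g := factor q t n lam (x + 1)).
  assert (Hfg : forall j, 0 <= f j <= g j).
  { intro j. split; [apply factor_bounds, HO | apply factor_le_compat; [exact HO | lra]]. }
  assert (Hg1 : forall j, g j <= 1) by (intro; apply factor_bounds, HO).
  assert (HT : tpow t m (x + 1) = t * tpow t m x).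
  { unfold tpow. replace (INR m + (x + 1)) with (1 + (INR m + x)) by ring.
    rewrite Rpower_plus, Rpower_1 by lra. reflexivity. }
  assert (Hgf : (1 - q) * (1 - t) / 4 <= g m - f m).
  { unfold f, g. rewrite !factor_eq_fac, HT.
    apply fac_jump; [apply qpow_le_q; [exact HO | lia] | lra | exact Ht | |].
    - apply Rpower_ge_1; lra.
    - rewrite <- HT. apply Rpower_le_1; lra. }
  assert (Hg : forall N, exp (- (1 / (1 - t))) <= prod_f_R0 g N).
  { intro N. eapply Rle_trans; [|apply prod_factor_ge_exp, HO].
    apply exp_le, Ropp_le_contravar. unfold Rdiv. apply Rmult_le_compat_r.
    - left. apply Rinv_0_lt_compat. lra.
    - fold m. apply Rpower_le_1; lra. }
  eapply (Rle_cv_lim_eventually _ _ _ _ m);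
    [| apply Un_cv_const | apply CV_minus; apply phi_cv, HO].
  intros N HN. unfold jump_const.
  eapply Rle_trans; [|apply (prod_f_R0_sub_ge f g m N Hfg Hg1 HN)].
  apply Rmult_le_compat; [nra | left; apply exp_pos | exact Hgf | apply Hg].
Qed.

Lemma phi_small (eps : R) : 0 < eps -> exists M, forall n lam x, in_Omega n lam ->
  eta n lam - x > M -> phi q t n lam x < eps.
Proof.
  intros Heps.
  destruct (pow_lt_1_zero ((1 + q) / 2) ltac:(rewrite Rabs_right; lra) eps Heps) as [K HK].
  exists (INR K). intros n lam x HO Hx. rewrite eta_in_Omega in Hx by exact HO.
  eapply Rle_lt_trans; [apply (phi_le_pow n lam x K HO); lra|].
  specialize (HK (S K) ltac:(lia)). rewrite Rabs_right in HK; [exact HK|].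
  apply Rle_ge, pow_le. lra.
Qed.

Lemma phi_large (eps : R) : 0 < eps -> exists M, forall n lam x, in_Omega n lam ->
  eta n lam - x < - M -> phi q t n lam x > 1 - eps.
Proof.
  intros Heps.
  destruct (pow_lt_1_zero t ltac:(rewrite Rabs_right; lra) (eps * (1 - t)) ltac:(nra))
    as [K HK].
  exists (INR K). intros n lam x HO Hx. rewrite eta_in_Omega in Hx by exact HO.
  pose proof (phi_ge_exp n lam x HO) as Hphi.
  set (T := tpow t (zero_parts n lam) x) in Hphi.
  assert (HT : T < eps * (1 - t)).
  { specialize (HK K (Nat.le_refl K)). rewrite Rabs_right in HK by (apply Rle_ge, pow_le; lra).
    rewrite <- Rpower_pow in HK by lra. eapply Rle_lt_trans; [|exact HK].
    apply Rpower_antimonotone; lra. }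
  assert (T / (1 - t) < eps).
  { apply Rmult_lt_reg_r with (1 - t); [lra|].
    unfold Rdiv. rewrite Rmult_assoc, Rinv_l by lra. lra. }
  pose proof (exp_ineq1_le (- (T / (1 - t)))). lra.
Qed.

Lemma phi_jump_interval n lam x : in_Omega n lam -> x < eta n lam <= x + 1 ->
  phi q t n lam (x + 1) - phi q t n lam x >= jump_const.
Proof.
  intros HO Hx. rewrite eta_in_Omega in Hx by exact HO.
  apply Rle_ge, phi_jump; [exact HO | lra].
Qed.

End Phi.

Lemma phi_asymp_equiv_conditions (q t : R) : 0 <= q < 1 -> 0 < t < 1 ->
  asymp_equiv_conditions (phi q t).
Proof.
  intros Hq Ht. split; [|split; [|split]].
  - intros n lam x y _ HO Hxy.
    pose proof (phi_bounds q t Hq Ht n lam x HO). pose proof (phi_bounds q t Hq Ht n lam y HO).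
    pose proof (phi_le_compat q t Hq Ht n lam x y HO Hxy). lra.
  - intros eps Heps. destruct (phi_small q t Hq Ht eps Heps) as [M HM]. exists M. auto.
  - intros eps Heps. destruct (phi_large q t Hq Ht eps Heps) as [M HM]. exists M. auto.
  - exists (jump_const q t). split; [now apply jump_const_pos|].
    intros n lam x _. now apply phi_jump_interval.
Qed.

Theorem proposition5p6 (q t : R) (hq0 : 0 <= q) (hq1 : q < 1)
  (ht0 : 0 < t) (ht1 : t < 1) :
  (forall n lam x y, (1 <= n)%nat -> in_Omega n lam -> x <= y ->
     0 <= phi q t n lam x /\ phi q t n lam x <= phi q t n lam y /\ phi q t n lam y <= 1) /\
  (forall eps, 0 < eps -> exists M, forall n lam x, (1 <= n)%nat -> in_Omega n lam ->
     eta n lam - x > M -> phi q t n lam x < eps) /\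
  (forall eps, 0 < eps -> exists M, forall n lam x, (1 <= n)%nat -> in_Omega n lam ->
     eta n lam - x < - M -> phi q t n lam x > 1 - eps) /\
  (exists c, 0 < c /\ forall n lam x, (1 <= n)%nat -> in_Omega n lam ->
     x < eta n lam <= x + 1 -> phi q t n lam (x + 1) - phi q t n lam x >= c) /\
  (forall (p : nat -> nat -> R) (a : nat -> nat -> list nat),
     (forall n, (1 <= n)%nat -> is_prob_measure n (p n) (a n)) ->
     (forall n x y, (1 <= n)%nat -> x <= y ->
        Fexp q t n (p n) (a n) x <= Fexp q t n (p n) (a n) y) /\
     asymp_equiv p a (fun n x => Fexp q t n (p n) (a n) x)).
Proof.
  assert (Hcond : asymp_equiv_conditions (phi q t)) by (apply phi_asymp_equiv_conditions; lra).
  pose proof Hcond as [C1 [C2 [C3 C4]]].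
  refine (conj C1 (conj C2 (conj C3 (conj C4 _)))).
  intros p a Hpa. exact (asymp_equiv_of_conditions (phi q t) Hcond p a Hpa).
Qed.
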